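(* Let $E$ be a finite ground set and let $\mathcal{F}\subseteq 2^E$ be a non-empty downward-closed family of feasible solutions, with unit weights (so the value of a set is its cardinality). Consider the robust counterpart $$\max_{S\in\mathcal{F}}\ \min_{f\in E\cup\{\emptyset\}}\ \max_{\substack{e\in (E\setminus(S\cup\{f\}))\cup\{\emptyset\}\\ (S\setminus\{f\})\cup\{e\}\in\mathcal{F}}} |(S\setminus\{f\})\cup\{e\}|.$$ Then there is a maximum-cardinality set $S\in\mathcal{F}$ that is an optimal first-stage solution of this robust counterpart. Furthermore, if some maximum-cardinality set $S\in\mathcal{F}$ is repairable, then $S$ is an optimal first-stage solution.
   Context: Downward-closed means: if $X\in\mathcal{F}$ and $X'\subseteq X$ then $X'\in\mathcal{F}$. In the robust counterpart, choosing $f=\emptyset$ means no element is deleted and choosing $e=\emptyset$ means no element is added. A set $S\in\mathcal{F}$ is called repairable if for every $f\in S$ there exists $e\in E\setminus S$ such that $(S\setminus\{f\})\cup\{e\}\in\mathcal{F}$. *)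

From mathcomp Require Import all_boot.
Set Implicit Arguments. Unset Strict Implicit. Unset Printing Implicit Defensive.

Section Robust.
Variable T : finType.
Implicit Types (F : {set {set T}}) (S : {set T}).

Definition down_closed F : Prop :=
  forall X X' : {set T}, X \in F -> X' \subset X -> X' \in F.

(* None plays the role of the empty choice "emptyset". *)
Definition del S (f : option T) : {set T} :=
  if f is Some x then S :\ x else S.
Definition add S (e : option T) : {set T} :=
  if e is Some x then x |: S else S.

Definition admissible F S (f e : option T) : bool :=
  (if e is Some x then (x \notin S) && (f != Some x) else true)
  && (add (del S f) e \in F).

Definition repair_value F S (f : option T) : nat :=
  \max_(e : option T | admissible F S f e) #|add (del S f) e|.

(* min over deletions f in E u {emptyset}; #|T|.+1 is a neutral upper bound. *)
Definition robust_value F S : nat :=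
  \big[minn/#|T|.+1]_(f : option T) repair_value F S f.

Definition optimal_first_stage F S : Prop :=
  S \in F /\ forall S', S' \in F -> robust_value F S' <= robust_value F S.

Definition is_max_card F S : Prop :=
  S \in F /\ forall S', S' \in F -> #|S'| <= #|S|.

Definition repairable F S : Prop :=
  S \in F /\ forall f, f \in S -> exists2 e, e \in ~: S & (S :\ f) :|: [set e] \in F.

End Robust.

(** Write k for the largest cardinality of a feasible set.  Every repair of
    every S is feasible, so the robust value of any S is at most k; deleting
    nothing shows that a maximum-cardinality S has robust value at least k - 1,
    and exactly k when it is repairable.  Conversely, a feasible S whose robust
    value reaches k yields a repairable maximum-cardinality set: S itself, or a
    feasible singleton when S is empty and k = 1.  Hence either some
    maximum-cardinality set is repairable and optimal, or every feasible set has
    robust value at most k - 1 and any maximum-cardinality set is optimal. *)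

From HB Require Import structures.
From mathcomp Require Import all_boot zify.
Set Implicit Arguments. Unset Strict Implicit. Unset Printing Implicit Defensive.

(* #|T|.+1 is not neutral for minn, but bigD1 only needs a semigroup law. *)
HB.instance Definition _ := SemiGroup.isComLaw.Build nat minn minnA minnC.

Section RobustCounterpart.
Variables (T : finType) (F : {set {set T}}).
Hypothesis F_down : down_closed F.
Implicit Types (S : {set T}) (f e : option T).

Lemma robust_value_le_repair S f : robust_value F S <= repair_value F S f.
Proof. by rewrite /robust_value (bigD1 f) //= geq_minl. Qed.

Lemma leq_robust_value S k :
  k <= #|T|.+1 -> (forall f, k <= repair_value F S f) -> k <= robust_value F S.
Proof.
move=> k_le k_repair; apply: (big_ind (leq k)) => // m n km kn.
by rewrite leq_min km kn.
Qed.

Lemma leq_repair_value S f e :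
  admissible F S f e -> #|add (del S f) e| <= repair_value F S f.
Proof. exact: leq_bigmax_cond. Qed.

Lemma repair_value_witness S f k : 0 < k -> k <= repair_value F S f ->
  exists2 e, admissible F S f e & k <= #|add (del S f) e|.
Proof.
move=> k_gt0 k_le; apply/exists_inP; apply: contraTT k_le => /exists_inPn small.
by rewrite -ltnNge -(prednK k_gt0) ltnS; apply/bigmax_leqP => e /small; lia.
Qed.

Lemma admissible_none S f : S \in F -> admissible F S f None.
Proof.
move=> SF; rewrite /admissible /=; apply: F_down SF _.
by case: f => [x|] /=; [apply: subD1set | ].
Qed.

Lemma robust_value_le_max S m :
  (forall S', S' \in F -> #|S'| <= m) -> robust_value F S <= m.
Proof.
move=> max_m; apply: leq_trans (robust_value_le_repair S None) _.
by apply/bigmax_leqP => e /andP[_ /max_m].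
Qed.

Lemma robust_value_le_card S x : x \in S -> robust_value F S <= #|S|.
Proof.
move=> xS; apply: leq_trans (robust_value_le_repair S (Some x)) _.
apply/bigmax_leqP => -[y|] /= _; last exact/subset_leq_card/subD1set.
by rewrite (cardsD1 x S) xS cardsU1; case: (y \in S :\ x).
Qed.

Lemma card_pred_le_robust_value S : S \in F -> #|S|.-1 <= robust_value F S.
Proof.
move=> SF; apply: leq_robust_value => [|f]; first by have := max_card S; lia.
apply: leq_trans (leq_repair_value (admissible_none f SF)).
case: f => [x|] /=; last exact: leq_pred.
rewrite (cardsD1 x S); case: (x \in S); lia.
Qed.

Lemma repairable_card_le_robust S :
  S \in F -> repairable F S <-> #|S| <= robust_value F S.
Proof.
move=> SF; split=> [[_ repair] | card_le].
  apply: leq_robust_value => [|[x|]]; first by have := max_card S; lia.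
  - have [xS | xNS] := boolP (x \in S); last first.
      have := leq_repair_value (admissible_none (Some x) SF).
      by rewrite /= (cardsD1 x S) (negbTE xNS).
    have [y yNS yF] := repair x xS; rewrite inE in yNS.
    have adm : admissible F S (Some x) (Some y).
      rewrite /admissible /= setUC yF yNS andbT.
      by apply: contraNneq yNS => -[<-].
    apply: leq_trans (leq_repair_value adm).
    by rewrite /= cardsU1 !inE (negbTE yNS) andbF (cardsD1 x S) xS.
  - exact: leq_repair_value (admissible_none None SF).
split=> // x xS; have card_gt0 : 0 < #|S| by apply/card_gt0P; exists x.
have card_le_x := leq_trans card_le (robust_value_le_repair S (Some x)).
have [[y|] adm card_ge] := repair_value_witness card_gt0 card_le_x.
  case/andP: adm => /andP[yNS _] yF.
  by exists y; rewrite ?inE // setUC.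
by move: card_ge; rewrite /= (cardsD1 x S) xS; lia.
Qed.

Lemma repairable_set1_of_robust_set0 :
  0 < robust_value F set0 -> exists y, repairable F [set y].
Proof.
move=> robust_gt0.
have [[y|] /andP[_ yF] card_ge] :=
  repair_value_witness robust_gt0 (robust_value_le_repair _ None);
  last by move: card_ge; rewrite /= cards0 leqNgt robust_gt0.
rewrite /= setU0 in yF; exists y; split=> // x; rewrite inE => /eqP ->.
have [[z|] adm card_ge'] :=
  repair_value_witness robust_gt0 (robust_value_le_repair _ (Some y));
  last by move: card_ge'; rewrite /= set0D cards0 leqNgt robust_gt0.
case/andP: adm => /andP[_ zy] zF.
exists z; first by rewrite !inE eq_sym; apply: contra zy => /eqP ->.
by rewrite setDv set0U; rewrite /= set0D setU0 in zF.
Qed.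

Lemma max_card_repairable_of_robust S0 S : is_max_card F S0 -> S \in F ->
  #|S0| <= robust_value F S -> exists Y, is_max_card F Y /\ repairable F Y.
Proof.
move=> [S0F maxS0] SF robust_ge.
have [S0_le | S_lt] := leqP #|S0| #|S|.
  have maxS : is_max_card F S by split=> // S' /maxS0 /leq_trans; apply.
  exists S; split=> //; rewrite repairable_card_le_robust //.
  exact: leq_trans (maxS0 S SF) robust_ge.
have S0_eq : S = set0.
  apply: contraTeq S_lt => /set0Pn[x xS].
  by rewrite -leqNgt (leq_trans robust_ge (robust_value_le_card xS)).
have card_S0 : #|S0| <= 1.
  apply: leq_trans robust_ge (leq_trans (robust_value_le_repair _ None) _).
  by apply/bigmax_leqP => -[y|] _; rewrite S0_eq /= ?cards0 ?setU0 ?cards1.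
have [y rep_y] : exists y, repairable F [set y].
  apply: repairable_set1_of_robust_set0.
  by rewrite -S0_eq (leq_trans _ robust_ge) // (leq_ltn_trans _ S_lt).
exists [set y]; split=> //; split; first by case: rep_y.
by move=> S' /maxS0 /leq_trans; apply; rewrite cards1.
Qed.

Lemma optimal_of_max_card_repairable S :
  is_max_card F S -> repairable F S -> optimal_first_stage F S.
Proof.
move=> [SF maxS] repS; split=> // S' _.
apply: leq_trans (robust_value_le_max S' maxS) _.
by rewrite -repairable_card_le_robust.
Qed.

Lemma exists_max_card S1 : S1 \in F -> exists S, is_max_card F S.
Proof. by move=> S1F; case: (arg_maxnP (fun S => #|S|) S1F) => S SF maxS; exists S. Qed.

End RobustCounterpart.

Theorem mainTheorem1 (T : finType) (F : {set {set T}}) :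
  F != set0 -> down_closed F ->
  (exists S : {set T}, is_max_card F S /\ optimal_first_stage F S) /\
  (forall S : {set T}, is_max_card F S -> repairable F S -> optimal_first_stage F S).
Proof.
move=> /set0Pn[S1 S1F] F_down.
split; last exact: optimal_of_max_card_repairable.
have [S0 maxS0] := exists_max_card S1F.
have [/exists_inP[S SF robust_ge] | /exists_inPn robust_lt] :=
  boolP [exists S in F, #|S0| <= robust_value F S].
  have [Y [maxY repY]] :=
    max_card_repairable_of_robust F_down maxS0 SF robust_ge.
  by exists Y; split=> //; apply: optimal_of_max_card_repairable.
case: maxS0 => [S0F maxS0]; exists S0; split=> //; split=> // S' S'F.
have := card_pred_le_robust_value F_down S0F; have := robust_lt S' S'F; lia.
Qed.
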